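(* For every finite graph $G$ with at least one edge and every positive integer $r$, \[ \mathrm{scol}_r(G)\le \biggl(3+\mathrm{tww}(G)\sum_{i=0}^{r-1}(\mathrm{tww}(G)-1)^{i}\biggr)\,\bar\omega(G)\le \bigl(\mathrm{tww}(G)^r+3\bigr)\,\bar\omega(G), \] with the convention $0^0=1$.
   Context: $\bar\omega(G)$ denotes the maximum integer $s$ such that the complete bipartite graph $K_{s,s}$ is a subgraph of $G$. Twin-width: a trigraph is a vertex set together with two disjoint sets of edges, black and red. Contracting two vertices $x,y$ of a trigraph produces a trigraph in which $x,y$ are replaced by a new vertex $z$ adjacent to every other vertex $w$ adjacent (by any edge) to $x$ or to $y$; the edge $zw$ is black if $xw$ and $yw$ are both black edges, and red otherwise; all other edges are unchanged. A $d$-contraction sequence of an $n$-vertex graph $G$ is a sequence of trigraphs $\mathbf G_n,\dots,\mathbf G_1$ where $\mathbf G_n$ is $G$ with all edges black, each $\mathbf G_i$ is obtained from $\mathbf G_{i+1}$ by one contraction, $\mathbf G_1$ has a single vertex, and every vertex of every $\mathbf G_i$ is incident to at most $d$ red edges. The twin-width $\mathrm{tww}(G)$ is the minimum $d$ for which $G$ has a $d$-contraction sequence. Strong colouring number: for a linear order $L$ of $V(G)$, a vertex $u$ is strongly $r$-reachable from $v$ if there is a path of length at most $r$ between $u$ and $v$ with $u\le_L v$ and all inner vertices $w$ satisfying $v<_L w$; $\mathrm{Sreach}_r[L,v]$ is the set of such $u$ (including $v$), and $\mathrm{scol}_r(G)=\min_L\max_{v}|\mathrm{Sreach}_r[L,v]|$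 over linear orders $L$ of $V(G)$. *)

From mathcomp Require Import all_boot.
Set Implicit Arguments. Unset Strict Implicit. Unset Printing Implicit Defensive.

Section Graphs.
Variable T : finType.

Definition simple_graph (e : rel T) : Prop := symmetric e /\ irreflexive e.

Definition has_Kss (e : rel T) (s : nat) : bool :=
  [exists A : {set T}, exists B : {set T},
     [&& #|A| == s, #|B| == s, [disjoint A & B] &
         [forall a in A, forall b in B, e a b]]].

Definition omegabar (e : rel T) : nat :=
  \max_(s < #|T|.+1 | has_Kss e s) (s : nat).

(* A trigraph whose vertices are a subset tV of T, with black edges tB and
   red edges tR (only pairs of vertices in tV are meaningful). *)
Record trigraph := Trigraph { tV : {set T}; tB : rel T; tR : rel T }.

Definition init_trigraph (e : rel T) : trigraph :=
  Trigraph [set: T] e (fun _ _ => false).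

(* Contract x and y: the new vertex z is named x, and y is removed. *)
Definition contract (G : trigraph) (x y : T) : trigraph :=
  let adj u v := tB G u v || tR G u v in
  let other u v := if u == x then v else u in
  Trigraph (tV G :\ y)
    (fun u v => if (u == x) || (v == x) then
                  let w := other u v in
                  [&& w != x, tB G x w & tB G y w]
                else tB G u v)
    (fun u v => if (u == x) || (v == x) then
                  let w := other u v in
                  [&& w != x, adj x w || adj y w & ~~ (tB G x w && tB G y w)]
                else tR G u v).

Definition red_deg (G : trigraph) (v : T) : nat :=
  #|[set w in tV G | tR G v w]|.

Definition red_bounded (d : nat) (G : trigraph) : bool :=
  [forall v in tV G, red_deg G v <= d].

Fixpoint contraction_seq (d : nat) (G : trigraph) (s : seq (T * T)) : bool :=
  red_bounded d G &&
  match s with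
  | [::] => #|tV G| == 1
  | (x, y) :: s' =>
      [&& x \in tV G, y \in tV G, x != y &
          contraction_seq d (contract G x y) s']
  end.

Definition has_contraction_seq (e : rel T) (d : nat) : Prop :=
  exists s, contraction_seq d (init_trigraph e) s.

Definition is_tww (e : rel T) (t : nat) : Prop :=
  has_contraction_seq e t /\ forall d, d < t -> ~ has_contraction_seq e d.

(* A linear order L of V(G) is encoded by an injective rank function
   f : T -> 'I_#|T| with u <=_L v iff f u <= f v. *)

(* u is strongly r-reachable from v: there is a path v = p_0, p_1, ..., p_k = u
   of length k <= r, with f u <= f v and all inner vertices w with f v < f w. *)
Definition sreach_path (e : rel T) (f : {ffun T -> 'I_#|T|}) (r : nat)
    (v u : T) : bool :=
  [exists n : 'I_r.+1, exists p : n.-tuple T,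
     [&& path e v p, last v p == u, uniq (v :: p) &
         all (fun w => f v < f w) (take (size p).-1 p)]].

Definition Sreach (e : rel T) (f : {ffun T -> 'I_#|T|}) (r : nat) (v : T)
    : {set T} :=
  [set u | (f u <= f v) && sreach_path e f r v u].

Definition scol (e : rel T) (r : nat) : nat :=
  \big[minn/#|T|]_(f : {ffun T -> 'I_#|T|} | injectiveb f)
     \max_(v : T) #|Sreach e f r v|.

End Graphs.

(* Fix a t-contraction sequence of G.  Every trigraph G_k of the sequence is
   a quotient of G: each vertex z of G is represented in G_k by the part it
   has been merged into, every edge of G between two parts is an edge of G_k,
   and a black edge of G_k means that the two parts are completely joined in
   G.  Call a part heavy when it has more than w vertices.  Two distinct heavy
   parts are never joined by a black edge and a heavy part has at most w black
   neighbours, since otherwise G would contain K_{w+1,w+1}.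

   Order the vertices of G so that those whose part becomes heavy later come
   first, and let v become heavy at step i inside the part P.  A vertex
   strongly r-reachable from v is reached along a path whose inner vertices
   are all in heavy parts of G_i, hence linked by red edges; so it lies in P
   among the vertices not heavy before step i (at most 2w), among the black
   neighbours of P (at most w), or is charged to one of the at most
   t * sum_(i<r) (t-1)^i parts of G_i at red distance at most r from P (at
   most w vertices each). *)

From mathcomp Require Import all_boot.
From mathcomp Require Import zify.
Set Implicit Arguments. Unset Strict Implicit. Unset Printing Implicit Defensive.

Lemma bigminn_le (I : finType) (P : pred I) (F : I -> nat) idx i0 :
  P i0 -> \big[minn/idx]_(i | P i) F i <= F i0.
Proof.
move=> Pi0; rewrite unlock.
have : i0 \in index_enum I by rewrite mem_index_enum.
elim: (index_enum I) => //= j s IH; rewrite inE => /orP[/eqP<-|Hs].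
  by rewrite Pi0 geq_minl.
case: (P j); last exact: IH.
exact: leq_trans (geq_minr _ _) (IH Hs).
Qed.

Lemma card_bigcup_le (T I : finType) (A : pred I) (F : I -> {set T}) :
  #|\bigcup_(i in A) F i| <= \sum_(i in A) #|F i|.
Proof.
elim/big_rec2: _ => [|i x y _ Hxy]; first by rewrite cards0.
exact: leq_trans (leq_card_setU _ _).1 (leq_add (leqnn _) Hxy).
Qed.

Lemma biclique_le_omegabar (T : finType) (e : rel T) (X Y : {set T}) :
  [disjoint X & Y] -> (forall a b, a \in X -> b \in Y -> e a b) ->
  minn #|X| #|Y| <= omegabar e.
Proof.
move=> dXY cXY; set s := minn _ _.
have /card_geqP [sx [ux szx subx]] : s <= #|X| by rewrite geq_minl.
have /card_geqP [sy [uy szy suby]] : s <= #|Y| by rewrite geq_minr.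
have Kss : has_Kss e s.
  apply/existsP; exists [set z in sx]; apply/existsP; exists [set z in sy].
  rewrite !cardsE (card_uniqP ux) (card_uniqP uy) szx szy !eqxx /=.
  apply/andP; split.
    apply: (disjointWl (B := X)); first by apply/subsetP=> z; rewrite inE; apply: subx.
    apply: (disjointWr (B := Y)); first by apply/subsetP=> z; rewrite inE; apply: suby.
    exact: dXY.
  apply/forallP=> a; apply/implyP; rewrite inE => Ha.
  apply/forallP=> b; apply/implyP; rewrite inE => Hb.
  exact: cXY (subx _ Ha) (suby _ Hb).
have s_small : s < #|T|.+1 by rewrite ltnS (leq_trans (geq_minl _ _) (max_card X)).
by rewrite /omegabar (leq_bigmax_cond (Ordinal s_small)).
Qed.

(* A trigraph G together with a map rp sending
   each vertex of the graph e to the vertex of G its part has been merged into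
   is a quotient of e when: red edges are symmetric, every edge of e between
   two distinct parts survives in G, and a black edge of G between two parts
   means they are completely joined in e. *)
Section Quotient.
Variables (T : finType) (e : rel T).
Hypothesis esym : symmetric e.

Record quotient_of (G : trigraph T) (rp : T -> T) : Prop := QuotientOf {
  rep_in : forall z, rp z \in tV G;
  red_sym : forall a b, tR G a b = tR G b a;
  edge_kept : forall z w, e z w -> rp z != rp w ->
    tB G (rp z) (rp w) || tR G (rp z) (rp w);
  black_complete : forall z w, rp z != rp w -> tB G (rp z) (rp w) -> e z w }.

Lemma quotient_init : quotient_of (init_trigraph e) id.
Proof. by split=> //= z w ->. Qed.

Definition merge_rep (rp : T -> T) (x y : T) (z : T) : T :=
  if rp z == y then x else rp z.

Lemma merge_repP (rp : T -> T) x y z :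
  ((rp z = x \/ rp z = y) /\ merge_rep rp x y z = x)
  \/ [/\ rp z != x, rp z != y & merge_rep rp x y z = rp z].
Proof.
rewrite /merge_rep; case: (eqVneq (rp z) y) => [->|zy]; first by left; split; [right|].
by case: (eqVneq (rp z) x) => [->|zx]; [left; split; [left|] | right].
Qed.

Lemma quotient_contract (G : trigraph T) (rp : T -> T) x y :
  x \in tV G -> y \in tV G -> x != y -> quotient_of G rp ->
  quotient_of (contract G x y) (merge_rep rp x y).
Proof.
move=> xV yV xy [Hin Hsym Hedge Hblack]; split.
- move=> z /=; rewrite in_setD1 /merge_rep.
  by case: (eqVneq (rp z) y) => [_|zy]; [rewrite xy xV | rewrite zy Hin].
- move=> a b /=.
  by case: (eqVneq a x) => [->|ax]; case: (eqVneq b x) => [->|bx];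
    rewrite ?eqxx ?(negbTE ax) ?(negbTE bx).
- move=> z w ezw.
  case: (merge_repP rp x y z) => [[Hz ->]|[zx zy ->]];
    case: (merge_repP rp x y w) => [[Hw ->]|[wx wy ->]].
  + by rewrite eqxx.
  + move=> _ /=; rewrite eqxx /= wx /=.
    case: (boolP (tB G x (rp w) && tB G y (rp w))) => //= _.
    have := Hedge z w ezw; case: Hz => ->.
    * by rewrite eq_sym wx => /(_ isT) ->.
    * by rewrite eq_sym wy => /(_ isT) ->; rewrite !orbT.
  + move=> _ /=; rewrite eqxx orbT /= (negbTE zx) zx /=.
    case: (boolP (tB G x (rp z) && tB G y (rp z))) => //= _.
    have := Hedge w z; rewrite esym => /(_ ezw); case: Hw => ->.
    * by rewrite eq_sym zx => /(_ isT) ->.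
    * by rewrite eq_sym zy => /(_ isT) ->; rewrite !orbT.
  + by move=> zw /=; rewrite (negbTE zx) (negbTE wx) /=; apply: Hedge.
- move=> z w.
  case: (merge_repP rp x y z) => [[Hz ->]|[zx zy ->]];
    case: (merge_repP rp x y w) => [[Hw ->]|[wx wy ->]].
  + by rewrite eqxx.
  + move=> _ /=; rewrite eqxx /= => /and3P [_ B1 B2].
    by case: Hz => Hz; apply: Hblack; rewrite Hz // eq_sym.
  + move=> _ /=; rewrite eqxx orbT /= (negbTE zx) => /and3P [_ B1 B2].
    by rewrite esym; case: Hw => Hw; apply: Hblack; rewrite Hw // eq_sym.
  + by move=> zw /=; rewrite (negbTE zx) (negbTE wx) /=; apply: Hblack.
Qed.
End Quotient.

(* A graph with an edge contains K_{1,1}. *)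
Lemma omegabar_gt0 (T : finType) (e : rel T) x y :
  x != y -> e x y -> 0 < omegabar e.
Proof.
move=> xy exy; have := @biclique_le_omegabar T e [set x] [set y].
rewrite !cards1; apply.
  by rewrite disjoint_sym disjoints1 in_set1 eq_sym.
by move=> a b; rewrite !inE => /eqP-> /eqP->.
Qed.

(* A biclique K_{s,s} uses 2s vertices, so omegabar e < #|T| when T is
   nonempty. *)
Lemma omegabar_lt_card (T : finType) (e : rel T) : 0 < #|T| -> omegabar e < #|T|.
Proof.
move=> T0; rewrite /omegabar -(prednK T0) ltnS; apply/bigmax_leqP => s.
move/existsP=> [A /existsP [B /and4P [/eqP HA /eqP HB dAB _]]].
have := max_card (A :|: B).
rewrite cardsU (disjoint_setI0 dAB) cards0 subn0 HA HB.
lia.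
Qed.

Definition contract_pair (T : finType) (G : trigraph T) (p : T * T) :=
  contract G p.1 p.2.

Lemma contraction_seq_drop (T : finType) d (G : trigraph T) s k :
  contraction_seq d G s ->
  contraction_seq d (foldl (@contract_pair T) G (take k s)) (drop k s).
Proof.
elim: s G k => [|[x y] s IH] G [|k] //= /andP [_ /and4P [_ _ _ Hs]].
exact: IH.
Qed.

Lemma contraction_seq_red_bounded (T : finType) d (G : trigraph T) s :
  contraction_seq d G s -> red_bounded d G.
Proof. by case: s => [|[x y] s] /andP []. Qed.

(* Balls for a symmetric relation R of maximum degree t on a vertex set V:
   the ball of radius d around P has at most 1 + t * sum_(i<d) (t-1)^i
   elements, since each new layer is at most t-1 times larger than the
   previous one (every vertex of a layer uses one of its t edges to reach
   back into the ball). *)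
Section Ball.
Variables (T : finType) (V : {set T}) (R : rel T) (t : nat) (P : T).
Hypothesis Rsym : forall a b, R a b = R b a.
Hypothesis deg : forall a, a \in V -> #|[set b in V | R a b]| <= t.
Hypothesis PV : P \in V.

Fixpoint ball d : {set T} :=
  if d is d'.+1 then ball d' :|: [set b in V | [exists a in ball d', R a b]]
  else [set P].

Lemma ball_S d : ball d.+1 = ball d :|: [set b in V | [exists a in ball d, R a b]].
Proof. by []. Qed.

Lemma ball_0 : ball 0 = [set P].
Proof. by []. Qed.

Arguments ball : simpl never.

Lemma ball_succ d : ball d \subset ball d.+1.
Proof. by rewrite ball_S subsetUl. Qed.

Lemma ball_mono d d' : d <= d' -> ball d \subset ball d'.
Proof.
elim: d' => [|d' IH]; first by rewrite leqn0 => /eqP->.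
rewrite leq_eqVlt => /orP[/eqP->//|]; rewrite ltnS => /IH H.
exact: subset_trans H (ball_succ _).
Qed.

Lemma ball_sub d : ball d \subset V.
Proof.
elim: d => [|d IH]; first by rewrite ball_0 sub1set.
by rewrite ball_S subUset IH /=; apply/subsetP=> b; rewrite inE => /andP[].
Qed.

Lemma ball_step d a b : a \in ball d -> b \in V -> R a b -> b \in ball d.+1.
Proof.
move=> Ha Hb Rab; rewrite ball_S inE; apply/orP; right.
by rewrite inE Hb /=; apply/existsP; exists a; rewrite Ha.
Qed.

Definition layer d := ball d.+1 :\: ball d.

Lemma layer_pred d b : b \in layer d.+1 -> exists2 a, a \in layer d & R a b.
Proof.
rewrite inE => /andP [nb]; rewrite ball_S inE (negbTE nb) /= inE => /andP [bV].
move/existsP=> [a /andP [Ha Rab]]; exists a => //.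
rewrite inE Ha andbT; apply: contra nb => Ha'.
exact: ball_step Ha' bV Rab.
Qed.

(* A vertex of a layer has at most t - 1 neighbours in the next layer, one of
   its neighbours lying strictly inside the ball. *)
Lemma layer_forward_deg d a :
  a \in layer d -> #|[set b in layer d.+1 | R a b]| <= t - 1.
Proof.
rewrite inE => /andP [na Ha].
have aV : a \in V by apply: (subsetP (ball_sub d.+1)).
have [c Hc Rca] : exists2 c, c \in ball d & R c a.
  move: Ha; rewrite ball_S inE (negbTE na) /= inE.
  by move=> /andP [_ /existsP [c /andP [Hc Rca]]]; exists c.
have cN : c \in [set b in V | R a b].
  by rewrite inE (subsetP (ball_sub d)) // Rsym.
have := deg aV; rewrite (cardsD1 c) cN add1n => Hd.
apply: leq_trans (_ : #|[set b in V | R a b] :\ c| <= _); last by lia.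
apply: subset_leq_card; apply/subsetP=> b; rewrite inE => /andP [Hb Rab].
have bV : b \in V by move: Hb; rewrite inE => /andP [_ /(subsetP (ball_sub _))].
rewrite in_setD1 inE bV Rab !andbT.
by apply: contraTneq Hb => ->; rewrite inE (subsetP (ball_succ d) c Hc).
Qed.

Lemma layer_card d : #|layer d| <= t * (t - 1) ^ d.
Proof.
elim: d => [|d IH].
  rewrite expn0 muln1; apply: leq_trans (deg PV); apply: subset_leq_card.
  apply/subsetP=> b; rewrite /layer ball_S ball_0 !inE => /andP [nbP] /orP [/eqP E|].
    by rewrite E eqxx in nbP.
  by move=> /andP [-> /existsP [a /andP [/set1P -> Rab]]].
have cover : layer d.+1 \subset \bigcup_(a in layer d) [set b in layer d.+1 | R a b].
  apply/subsetP=> b Hb; have [a Ha Rab] := layer_pred Hb.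
  by apply/bigcupP; exists a => //; rewrite inE Hb.
apply: leq_trans (subset_leq_card cover) _.
apply: leq_trans (card_bigcup_le _ _) _.
apply: leq_trans (@leq_sum _ _ _ _ (fun _ => t - 1) (@layer_forward_deg d)) _.
by rewrite sum_nat_const expnS mulnCA mulnC leq_mul2l IH orbT.
Qed.

Lemma ball_card d : #|ball d :\ P| <= t * \sum_(i < d) (t - 1) ^ i.
Proof.
elim: d => [|d IH]; first by rewrite big_ord0 muln0 ball_0 setDv cards0.
rewrite big_ord_recr /= mulnDr.
apply: leq_trans (_ : #|(ball d :\ P) :|: layer d| <= _).
  apply: subset_leq_card; apply/subsetP=> b; rewrite !inE.
  by case: (b \in ball d) => /= [/andP[->]|/andP[_ ->]]; rewrite ?orbT.
exact: leq_trans (leq_card_setU _ _).1 (leq_add IH (layer_card d)).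
Qed.
End Ball.

(* Every ranking g : T -> nat is refined by a linear order of T, encoded as an
   injective rank function: the rank of z counts the vertices strictly below z
   in the lexicographic order of (g z, enum_rank z). *)
Lemma linear_order_refining (T : finType) (g : T -> nat) :
  exists f : {ffun T -> 'I_#|T|},
    injectiveb f /\ forall a b, g a < g b -> f a < f b.
Proof.
pose K z := g z * #|T| + enum_rank z.
pose below z := [set w | K w < K z].
have below_small z : #|below z| < #|T|.
  have : 0 < #|~: below z| by apply/card_gt0P; exists z; rewrite !inE ltnn.
  by have := cardsC (below z); lia.
pose f := [ffun z => Ordinal (below_small z)].
have f_mono a b : K a < K b -> f a < f b.
  move=> Kab; rewrite !ffunE /=; apply: proper_card; apply/properP; split.
    by apply/subsetP=> w; rewrite !inE => H; apply: ltn_trans H Kab.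
  by exists a; rewrite !inE ?ltnn.
exists f; split.
  apply/injectiveP=> a b fab.
  have Kab : K a = K b.
    by case: (ltngtP (K a) (K b)) => // /f_mono; rewrite fab ltnn.
  apply: enum_rank_inj; apply: val_inj => /=.
  by have := congr1 (modn^~ #|T|) Kab; rewrite /K /= !modnMDl !modn_small.
move=> a b gab; apply: f_mono; rewrite /K.
have ra : (enum_rank a : nat) < #|T| by [].
have rb : (enum_rank b : nat) < #|T| by [].
nia.
Qed.

Lemma geometric_bound (t r : nat) : 0 < r -> t * \sum_(i < r) (t - 1) ^ i <= t ^ r.
Proof.
case: r => // r _; elim: r => [|r IH]; first by rewrite big_ord1 expn0 muln1 expn1.
rewrite big_ord_recr /= mulnDr [t ^ r.+2]expnS.
have last_term : t * (t - 1) ^ r.+1 <= (t - 1) * t ^ r.+1.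
  have pow_mono : (t - 1) ^ r <= t ^ r.
    by case: (r) => [|r']; rewrite ?expn0 // leq_exp2r ?leq_subr.
  rewrite [(t - 1) ^ r.+1]expnS [t ^ r.+1]expnS mulnCA.
  by rewrite leq_mul2l leq_mul2l pow_mono !orbT.
case: t IH last_term => [|t] IH last_term; first by rewrite !mul0n.
by apply: leq_trans (leq_add IH last_term) _; rewrite subSS subn0 -mulSn.
Qed.

Section ContractionSequence.
Variables (T : finType) (e : rel T) (t : nat) (s : seq (T * T)) (x0 : T).
Hypothesis esym : symmetric e.
Hypothesis s_contracts : contraction_seq t (init_trigraph e) s.
Hypothesis om_gt0 : 0 < omegabar e.
Hypothesis om_lt_card : omegabar e < #|T|.

Local Notation m := (size s).
Local Notation om := (omegabar e).

(* G_k is the trigraph after k contractions, (x_k, y_k) the pair contracted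
   at step k, and rep k z the vertex of G_k representing the part of z. *)
Definition Gk k := foldl (@contract_pair T) (init_trigraph e) (take k s).
Definition xk k := (nth (x0, x0) s k).1.
Definition yk k := (nth (x0, x0) s k).2.
Fixpoint rep k z := if k is k'.+1 then merge_rep (rep k') (xk k') (yk k') z else z.

Lemma Gk_succ k : k < m -> Gk k.+1 = contract (Gk k) (xk k) (yk k).
Proof. by move=> km; rewrite /Gk (take_nth (x0, x0)) // -cats1 foldl_cat. Qed.

Lemma Gk_seq k : contraction_seq t (Gk k) (drop k s).
Proof. exact: contraction_seq_drop. Qed.

Lemma Gk_red_bounded k : red_bounded t (Gk k).
Proof. exact: contraction_seq_red_bounded (Gk_seq k). Qed.

Lemma Gk_step k : k < m ->
  [&& xk k \in tV (Gk k), yk k \in tV (Gk k) & xk k != yk k].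
Proof.
move=> km; have := Gk_seq k; rewrite (drop_nth (x0, x0) km) /xk /yk.
by case: (nth _ s k) => x y /= /andP [_ /and4P [-> -> ->]].
Qed.

Lemma Gk_final : #|tV (Gk m)| = 1.
Proof. by have := Gk_seq m; rewrite drop_size /= => /andP [_ /eqP]. Qed.

Lemma Gk_quotient k : k <= m -> quotient_of e (Gk k) (rep k).
Proof.
elim: k => [|k IH] km; first by rewrite /Gk take0; exact: quotient_init.
have /and3P [xV yV xy] := Gk_step km.
by rewrite Gk_succ //; apply: quotient_contract => //; apply: IH; apply: ltnW.
Qed.

Definition part k a := [set z | rep k z == a].
Definition heavy k z := om < #|part k (rep k z)|.

Lemma part_mono k k' z : k <= k' -> part k (rep k z) \subset part k' (rep k' z).
Proof.
elim: k' => [|k' IH]; first by rewrite leqn0 => /eqP->.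
rewrite leq_eqVlt => /orP[/eqP->//|]; rewrite ltnS => /IH sub_k'.
apply: subset_trans sub_k' _; apply/subsetP=> w; rewrite !inE /=.
by move=> /eqP; rewrite /merge_rep => ->.
Qed.

Lemma heavy_mono k k' z : k <= k' -> heavy k z -> heavy k' z.
Proof. by move=> kk' /leq_trans; apply; apply: subset_leq_card (part_mono z kk'). Qed.

(* At the end everything is one part, of size #|T| > omegabar e. *)
Lemma heavy_final z : heavy m z.
Proof.
have /eqP/cards1P [c Vc] := Gk_final.
have rep_c w : rep m w = c.
  by have := rep_in (Gk_quotient (leqnn m)) w; rewrite Vc => /set1P.
rewrite /heavy; suff -> : part m (rep m z) = setT by rewrite cardsT.
by apply/setP=> w; rewrite !inE !rep_c eqxx.
Qed.

(* At the start every part is a single vertex, and omegabar e >= 1. *)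
Lemma not_heavy0 z : ~~ heavy 0 z.
Proof.
rewrite /heavy /part /= -leqNgt.
suff -> : [set w | w == z] = [set z] by rewrite cards1.
by apply/setP=> w; rewrite !inE.
Qed.

(* tau z is the step at which the part of z becomes heavy; it exists since
   the last part is heavy and the first ones are not. *)
Definition tau z := find (heavy^~ z) (iota 0 m.+1).

Lemma has_heavy z : has (heavy^~ z) (iota 0 m.+1).
Proof. by apply/hasP; exists m; [rewrite mem_iota add0n ltnSn | exact: heavy_final]. Qed.

Lemma tau_le z : tau z <= m.
Proof. by have := has_heavy z; rewrite has_find size_iota. Qed.

Lemma heavyE k z : heavy k z = (tau z <= k).
Proof.
have heavy_tau : heavy (tau z) z.
  by have := nth_find 0 (has_heavy z); rewrite nth_iota // ltnS tau_le.
apply/idP/idP => [Hk|]; last by move/heavy_mono; apply.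
rewrite leqNgt; apply/negP => kz; move: Hk.
have := before_find 0 kz; rewrite nth_iota ?add0n => [->//|].
by rewrite ltnS (leq_trans (ltnW kz) (tau_le z)).
Qed.

Lemma tau_gt0 z : 0 < tau z.
Proof. by rewrite ltnNge -heavyE (negbTE (not_heavy0 z)). Qed.

Lemma rep_tau j u : tau u = j.+1 -> rep j.+1 u = xk j.
Proof.
move=> tau_u; apply/eqP; apply: contraT => rep_x.
have : ~~ heavy j u by rewrite heavyE tau_u ltnn.
have : heavy j.+1 u by rewrite heavyE tau_u.
move: rep_x; rewrite /heavy /= /merge_rep.
case: (eqVneq (rep j u) (yk j)) => [->|rep_y rep_x]; first by rewrite eqxx.
suff -> : part j.+1 (rep j u) = part j (rep j u) by move=> ->.
apply/setP=> z; rewrite !inE /= /merge_rep.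
case: (eqVneq (rep j z) (yk j)) => [->|//].
by rewrite eq_sym (negbTE rep_x) eq_sym (negbTE rep_y).
Qed.

Definition blackN k a := [set z | (rep k z != a) && tB (Gk k) a (rep k z)].

(* A heavy part is completely joined to its black neighbourhood, which is
   therefore small. *)
Lemma blackN_card k a : k <= m -> om < #|part k a| -> #|blackN k a| <= om.
Proof.
move=> km heavy_a.
have := @biclique_le_omegabar T e (part k a) (blackN k a).
have -> : [disjoint part k a & blackN k a].
  rewrite -setI_eq0; apply/eqP/setP=> z; rewrite !inE.
  by case: (rep k z == a).
have join z w : z \in part k a -> w \in blackN k a -> e z w.
  rewrite !inE => /eqP rep_z /andP [rep_w Bw].
  by apply: (black_complete (Gk_quotient km)); rewrite rep_z // eq_sym.
by move=> /(_ isT join); lia.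
Qed.

Lemma no_black_heavy k z w : k <= m -> heavy k z -> heavy k w ->
  rep k z != rep k w -> ~~ tB (Gk k) (rep k z) (rep k w).
Proof.
move=> km hz hw zw; apply/negP => Bzw.
have := @biclique_le_omegabar T e (part k (rep k z)) (part k (rep k w)).
have -> : [disjoint part k (rep k z) & part k (rep k w)].
  rewrite -setI_eq0; apply/eqP/setP=> u; rewrite !inE.
  by case: (eqVneq (rep k u) (rep k z)) => // ->; rewrite (negbTE zw).
have join a b : a \in part k (rep k z) -> b \in part k (rep k w) -> e a b.
  rewrite !inE => /eqP rep_a /eqP rep_b.
  by apply: (black_complete (Gk_quotient km)); rewrite rep_a rep_b.
by move=> /(_ isT join); move: hz hw; rewrite /heavy; lia.
Qed.

(* The vertices charged to a part c: its black neighbourhood if it is heavy,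
   the part itself otherwise.  Either way there are at most omegabar e. *)
Definition contrib k c := if om < #|part k c| then blackN k c else part k c.

Lemma contrib_card k c : k <= m -> #|contrib k c| <= om.
Proof.
move=> km; rewrite /contrib; case: ifP => [|/negbT]; first exact: blackN_card.
by rewrite -leqNgt.
Qed.

Section Vertex.
Variables (v : T) (r : nat).
Local Notation i := (tau v).
Local Notation P := (rep (tau v) v).
Local Notation H := (Gk (tau v)).

Let i_le : i <= m. Proof. exact: tau_le. Qed.
Let HQ : quotient_of e H (rep i). Proof. exact: Gk_quotient. Qed.
Let heavy_v : heavy i v. Proof. by rewrite heavyE. Qed.

(* The vertices of P whose own part was not heavy before step i: they come
   from the two non-heavy parts merged at step i - 1. *)
Definition fresh_part := [set z | (rep i z == P) && (i <= tau z)].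

Lemma fresh_part_card : #|fresh_part| <= om.*2.
Proof.
have := tau_gt0 v; case Ei: (tau v) => [//|j] _.
have repP := rep_tau Ei.
pose light_part a := [set z | (rep j z == a) && ~~ heavy j z].
have light_card a : #|light_part a| <= om.
  case: (set_0Vmem (light_part a)) => [->|[z0]]; first by rewrite cards0.
  rewrite inE => /andP [/eqP rep_z0 light_z0].
  apply: leq_trans (_ : #|part j (rep j z0)| <= _); last by rewrite leqNgt.
  by apply: subset_leq_card; apply/subsetP=> z; rewrite !inE rep_z0 => /andP[].
apply: leq_trans (_ : #|light_part (xk j) :|: light_part (yk j)| <= _).
  apply: subset_leq_card; apply/subsetP=> z; rewrite !inE Ei repP => /andP [Hz Hj].
  have -> : ~~ heavy j z by rewrite heavyE -ltnNge.
  move: Hz; rewrite /= /merge_rep !andbT.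
  by case: (eqVneq (rep j z) (yk j)) => [->|_ ->]; rewrite ?orbT ?eqxx.
rewrite -addnn; exact: leq_trans (leq_card_setU _ _).1 (leq_add _ _).
Qed.

Definition Bl := ball (tV H) (tR H) P.

(* Along a path from v through vertices heavy at time i, consecutive parts
   are equal or joined by a red edge, so the path stays in a red ball. *)
Lemma heavy_walk p : path e v p -> all (fun w => tau w <= i) p ->
  rep i (last v p) \in Bl (size p) /\ heavy i (last v p).
Proof.
elim/last_ind: p => [|p w IH] /=; first by rewrite set11.
rewrite rcons_path all_rcons last_rcons size_rcons => /andP [Hp ew] /andP [tw Hall].
have [IH1 IH2] := IH Hp Hall.
have hw : heavy i w by rewrite heavyE.
split=> //; case: (eqVneq (rep i (last v p)) (rep i w)) => [<-|ne].
  exact: (subsetP (ball_succ _ _ _ _)).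
have := edge_kept HQ ew ne; rewrite (negbTE (no_black_heavy i_le IH2 hw ne)) /=.
exact: ball_step IH1 (rep_in HQ w).
Qed.

Lemma cross_edge d w u : d < r -> rep i w \in Bl d -> heavy i w ->
  ~~ heavy i u -> e w u ->
  u \in blackN i P :|: \bigcup_(c in Bl r :\ P) contrib i c.
Proof.
move=> dr Bw hw lu ewu.
have ne : rep i w != rep i u by apply: contraNneq lu => E; rewrite /heavy -E.
have Bl_r d' : d' <= r -> Bl d' \subset Bl r by apply: ball_mono.
case/orP: (edge_kept HQ ewu ne) => [black|red].
  case: (eqVneq (rep i w) P) => [wP|nP].
    by rewrite !inE -wP eq_sym ne black.
  apply/setUP; right; apply/bigcupP; exists (rep i w).
    by rewrite in_setD1 nP (subsetP (Bl_r _ (ltnW dr))).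
  by rewrite /contrib ifT // inE eq_sym ne black.
have Bu : rep i u \in Bl d.+1 by apply: ball_step Bw (rep_in HQ u) red.
have uP : rep i u != P by apply: contraNneq lu => E; rewrite /heavy E.
apply/setUP; right; apply/bigcupP; exists (rep i u).
  by rewrite in_setD1 uP (subsetP (Bl_r _ dr)).
by rewrite /contrib ifF ?inE //; apply/negbTE.
Qed.

Lemma sreach_sub (f : {ffun T -> 'I_#|T|}) :
  (forall a b, tau a < tau b -> f b < f a) ->
  Sreach e f r v \subset
    fresh_part :|: (blackN i P :|: \bigcup_(c in Bl r :\ P) contrib i c).
Proof.
move=> f_mono; apply/subsetP=> u; rewrite inE => /andP [fuv].
move=> /existsP [n /existsP [p /and4P [Hpath /eqP Hlast _ Hinner]]].
have tuv : i <= tau u by rewrite leqNgt; apply: contraTN fuv => /f_mono; rewrite -ltnNge.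
case: (boolP (heavy i u)) => [hu|lu].
  have tu : tau u = i by apply/eqP; rewrite eqn_leq tuv -heavyE hu.
  apply/setUP; left; rewrite inE tu leqnn andbT.
  move: (tau_gt0 v) tu; case Ei: (tau v) => [//|j] _ tu.
  by rewrite (rep_tau tu) (rep_tau Ei).
have szp : size (tval p) <= r by rewrite size_tuple -ltnS.
move: Hpath Hlast Hinner szp; case/lastP: (tval p) => [_ /= uv|q w].
  by move: lu; rewrite -uv heavy_v.
rewrite rcons_path last_rcons size_rcons /= -cats1 take_size_cat //.
move=> /andP [Hp ew] wu; subst w => Hall szq.
have Hall' : all (fun w => tau w <= i) q.
  apply: sub_all Hall => w /= fw; rewrite leqNgt.
  by apply: contraTN fw => /f_mono; rewrite -leqNgt; apply: ltnW.
have [Bq hq] := heavy_walk Hp Hall'.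
by apply/setUP; right; apply: cross_edge szq Bq hq lu ew.
Qed.

(* Summing the bounds: 2w fresh vertices, w black neighbours of P, and w
   vertices for each part of the red ball other than P. *)
Lemma sreach_card (f : {ffun T -> 'I_#|T|}) :
  (forall a b, tau a < tau b -> f b < f a) ->
  #|Sreach e f r v| <= (3 + t * \sum_(k < r) (t - 1) ^ k) * om.
Proof.
move=> f_mono.
have deg a : a \in tV H -> #|[set b in tV H | tR H a b]| <= t.
  by move=> aV; move/forallP: (Gk_red_bounded i) => /(_ a) /implyP /(_ aV).
have ball_small := ball_card (red_sym HQ) deg (rep_in HQ v) r.
have charged : #|\bigcup_(c in Bl r :\ P) contrib i c| <= #|Bl r :\ P| * om.
  apply: leq_trans (card_bigcup_le _ _) _; rewrite -sum_nat_const.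
  by apply: leq_sum => c _; exact: contrib_card.
apply: leq_trans (subset_leq_card (sreach_sub f_mono)) _.
apply: leq_trans (leq_card_setU _ _).1 _.
apply: leq_trans (leq_add (leqnn _) (leq_card_setU _ _).1) _.
have := leq_add fresh_part_card (leq_add (blackN_card i_le heavy_v) charged).
have : #|Bl r :\ P| * om <= t * (\sum_(k < r) (t - 1) ^ k) * om.
  by rewrite leq_mul2r ball_small orbT.
lia.
Qed.
End Vertex.

(* Ordering vertices by decreasing tau bounds scol_r. *)
Lemma scol_bound r : scol e r <= (3 + t * \sum_(k < r) (t - 1) ^ k) * om.
Proof.
have [f [f_inj f_mono]] := linear_order_refining (fun z => m - tau z).
have f_anti a b : tau a < tau b -> f b < f a.
  by move=> ab; apply: f_mono; have := tau_le b; lia.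
rewrite /scol; apply: leq_trans (bigminn_le _ _ f_inj) _.
by apply/bigmax_leqP => v _; apply: sreach_card.
Qed.
End ContractionSequence.

Theorem theorem2 (T : finType) (e : rel T) (t r : nat) :
  simple_graph e ->
  (exists x y, e x y) ->
  0 < r ->
  is_tww e t ->
  scol e r <= (3 + t * \sum_(i < r) (t - 1) ^ i) * omegabar e
  /\ (3 + t * \sum_(i < r) (t - 1) ^ i) * omegabar e <= (t ^ r + 3) * omegabar e.
Proof.
move=> [esym eirr] [x [y exy]] r_gt0 [[s s_contracts] _].
have xy : x != y by apply: contraTneq exy => ->; rewrite eirr.
have om_gt0 := omegabar_gt0 xy exy.
have om_lt_card : omegabar e < #|T| by apply: omegabar_lt_card; apply/card_gt0P; exists x.
split; first exact: (scol_bound x esym s_contracts om_gt0 om_lt_card).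
by rewrite leq_mul2r addnC leq_add2r geometric_bound ?orbT.
Qed.
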